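(* Let $G$ be a simple graph on vertex set $\{1,\dots,n\}$. The lexicographic algorithm (Algorithm 1) applied to $G$ returns ''failure'' if and only if $G$ is not twin-free; and if $G$ is twin-free, the set $C_n$ it returns is an identifying code of $G$.
   Context: Vertices of $G$ are identified with the integers $1,\dots,n$ and ordered by the usual order. For a vertex $v$, $N(v)=\{v\}\cup\{w : vw\in E(G)\}$ is its closed neighbourhood. A set $C\subseteq V(G)$ is an identifying code if the sets $N(v)\cap C$, $v\in V(G)$, are all nonempty and pairwise distinct. $G$ is twin-free if $N(v)\neq N(w)$ for all distinct vertices $v,w$. The lexicographic algorithm (Algorithm 1): set $C_0=\emptyset$. For $j=1,2,\dots,n$ in turn: (i) if $N(j)\cap C_{j-1}=\emptyset$, set $C_j=C_{j-1}\cup\{\min N(j)\}$; (ii) otherwise, if there exists $k\in\{1,\dots,j-1\}$ with $N(k)\cap C_{j-1}=N(j)\cap C_{j-1}$, let $k$ be the least such index; if $N(j)\neq N(k)$ set $C_j=C_{j-1}\cup\{\min(N(j)\triangle N(k))\}$, while if $N(j)=N(k)$ the algorithm stops immediately and returns ''failure''; (iii) otherwise set $C_j=C_{j-1}$. If the algorithm never fails, it returns $C_n$. Here $\triangle$ denotes symmetric difference. *)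

From mathcomp Require Import all_boot.
Set Implicit Arguments. Unset Strict Implicit. Unset Printing Implicit Defensive.

(* Vertices 1..n are represented by 'I_n (value k stands for vertex k+1);
   the order on vertices is the usual order on their values. *)

Definition simple_graph (n : nat) (e : rel 'I_n) : Prop :=
  symmetric e /\ irreflexive e.

Definition N (n : nat) (e : rel 'I_n) (v : 'I_n) : {set 'I_n} :=
  v |: [set w | e v w].

Definition twin_free (n : nat) (e : rel 'I_n) : Prop :=
  forall v w : 'I_n, v != w -> N e v != N e w.

Definition identifying_code (n : nat) (e : rel 'I_n) (C : {set 'I_n}) : Prop :=
  (forall v, N e v :&: C != set0) /\
  (forall v w, v != w -> N e v :&: C != N e w :&: C).

(* minimum of a set of vertices (default d if the set is empty; the
   algorithm only takes minima of nonempty sets) *)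
Definition setmin (n : nat) (d : 'I_n) (A : {set 'I_n}) : 'I_n :=
  odflt d [pick x in A | [forall y in A, (x <= y)%N]].

(* One step of Algorithm 1 at vertex j, given C_{j-1}; None = failure *)
Definition lex_step (n : nat) (e : rel 'I_n) (j : 'I_n) (C : {set 'I_n})
  : option {set 'I_n} :=
  if N e j :&: C == set0 then Some (setmin j (N e j) |: C)
  else match [pick k : 'I_n | (k < j)%N && (N e k :&: C == N e j :&: C)
                              & [forall k' : 'I_n,
                                   ((k' < j)%N && (N e k' :&: C == N e j :&: C))
                                   ==> (k <= k')%N]] with
       | Some k =>
           if N e j == N e k then None
           else Some (setmin j ((N e j :\: N e k) :|: (N e k :\: N e j)) |: C)
       | None => Some C
       end.

Definition lex_algorithm (n : nat) (e : rel 'I_n) : option {set 'I_n} :=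
  foldl (fun oC j => if oC is Some C then lex_step e j C else None)
        (Some set0) (enum 'I_n).

From mathcomp Require Import all_boot.

Set Implicit Arguments. Unset Strict Implicit. Unset Printing Implicit Defensive.

(* The proof is an invariant argument along the run of the algorithm.  Call
   C a partial code for the first m vertices if N(v) ∩ C is nonempty for
   every v < m and N(v) ∩ C, N(w) ∩ C differ for distinct v, w < m.  Both
   properties survive enlarging C, which is all the algorithm ever does.
   1. A successful step at vertex j turns a partial code for the first j
      vertices into one for the first j+1 vertices: case (i) dominates j,
      case (ii) separates j from the unique earlier vertex k it was confused
      with, and in case (iii) j was already dominated and separated.
   2. A failing step at j exhibits an earlier twin k < j of j.
   Running the steps over 0, ..., n-1 thus ends either in an identifying
   code or with a pair of twins.  Since an identifying code forces twin-
   freeness, failure happens exactly when G is not twin-free. *)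

Lemma setmin_mem (n : nat) (d : 'I_n) (A : {set 'I_n}) :
  A != set0 -> setmin d A \in A.
Proof.
case/set0Pn=> a Aa; rewrite /setmin; case: pickP => [x /andP[] // | nomin].
have [m Am minm] := arg_minnP (fun i : 'I_n => nat_of_ord i) Aa.
have mA : m \in A := Am.
have least : [forall y in A, m <= y] by apply/forall_inP; exact: minm.
by move: (nomin m); rewrite /= mA least.
Qed.

Lemma trace_neq_sub (T : finType) (C C' A B : {set T}) :
  C \subset C' -> A :&: C != B :&: C -> A :&: C' != B :&: C'.
Proof.
move=> sCC'; apply: contra => /eqP eqAB; apply/eqP.
by rewrite -(setIidPr sCC') !setIA eqAB.
Qed.

Lemma trace_n0_sub (T : finType) (C C' A : {set T}) :
  C \subset C' -> A :&: C != set0 -> A :&: C' != set0.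
Proof.
move=> sCC'; apply: contra => /eqP A0; apply/eqP.
by rewrite -(setIidPr sCC') setIA A0 set0I.
Qed.

Lemma identifying_code_twin_free (n : nat) (e : rel 'I_n) (C : {set 'I_n}) :
  identifying_code e C -> twin_free e.
Proof. by case=> _ sep v w /(sep v w); apply: contra => /eqP ->. Qed.

Section LexAlgorithm.
Variables (n : nat) (e : rel 'I_n).

(* N(j) is never empty, so the least neighbour in case (i) exists. *)
Lemma N_self (v : 'I_n) : v \in N e v.
Proof. by rewrite /N setU11. Qed.

Definition partial_code (C : {set 'I_n}) (m : nat) : Prop :=
  (forall v : 'I_n, v < m -> N e v :&: C != set0) /\
  (forall v w : 'I_n, v < m -> w < m -> v != w -> N e v :&: C != N e w :&: C).

Lemma partial_code_full (C : {set 'I_n}) :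
  partial_code C n -> identifying_code e C.
Proof. by case=> dom sep; split=> [v | v w]; [apply: dom | apply: sep]. Qed.

Lemma partial_code_extend (C C' : {set 'I_n}) (j : 'I_n) :
  partial_code C j -> C \subset C' -> N e j :&: C' != set0 ->
  (forall v : 'I_n, v < j -> N e v :&: C' != N e j :&: C') ->
  partial_code C' j.+1.
Proof.
move=> [dom sep] sCC' domj sepj.
have le_j (v : 'I_n) : v < j.+1 -> v = j \/ v < j.
  by rewrite ltnS leq_eqVlt => /orP[/eqP/val_inj|]; [left | right].
split=> [v /le_j[-> // | vj] | v w /le_j[-> | vj] /le_j[-> | wj] vw].
- exact: trace_n0_sub sCC' (dom _ vj).
- by rewrite eqxx in vw.
- by rewrite eq_sym sepj.
- exact: sepj.
- exact: trace_neq_sub sCC' (sep _ _ vj wj vw).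
Qed.

Lemma lex_step_fail (C : {set 'I_n}) (j : 'I_n) :
  lex_step e j C = None -> exists2 k : 'I_n, k < j & N e k = N e j.
Proof.
rewrite /lex_step; case: ifP => // _.
case: pickP => // k /andP[/andP[kj _] _].
by case: ifP => // /eqP twin _; exists k.
Qed.

Lemma separated_by_symdiff (C : {set 'I_n}) (j k x : 'I_n) :
  x \in (N e j :\: N e k) :|: (N e k :\: N e j) ->
  N e k :&: (x |: C) != N e j :&: (x |: C).
Proof.
move=> xD; apply/negP => /eqP/setP/(_ x); rewrite !in_setI setU11 !andbT.
by move: xD; rewrite in_setU !in_setD; case: (x \in N e j); case: (x \in N e k).
Qed.

Lemma lex_step_extend (C C' : {set 'I_n}) (j : 'I_n) :
  partial_code C j -> lex_step e j C = Some C' -> partial_code C' j.+1.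
Proof.
move=> pc; have [dom sep] := pc; rewrite /lex_step.
case: ifP => [/eqP undom [<-] | /negbT domj].
  (* case (i): add the least neighbour of j *)
  have sCC' := subsetUr [set setmin j (N e j)] C.
  apply: (partial_code_extend pc sCC').
    apply/set0Pn; exists (setmin j (N e j)).
    by rewrite inE setU11 andbT setmin_mem //; apply/set0Pn; exists j; apply: N_self.
  by move=> v vj; apply: (trace_neq_sub sCC'); rewrite undom dom.
case: pickP => [k /andP[/andP[kj /eqP confused] _] | nok].
  (* case (ii): separate j from the least earlier vertex k confused with it *)
  case: ifP => // /negbT notwin [<-].
  set D := (N e j :\: N e k) :|: (N e k :\: N e j).
  have xD : setmin j D \in D.
    apply: setmin_mem; apply: contra notwin => /eqP D0; apply/eqP/setP => y.
    move/setP: D0 => /(_ y); rewrite in_set0 in_setU !in_setD.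
    by case: (y \in N e j); case: (y \in N e k).
  have sCC' := subsetUr [set setmin j D] C.
  apply: (partial_code_extend pc sCC' (trace_n0_sub sCC' domj)) => v vj.
  have [-> | vk] := eqVneq v k; first exact: separated_by_symdiff.
  apply: (trace_neq_sub sCC'); rewrite -confused; exact: sep.
(* case (iii): j is already separated from every earlier vertex, since an
   earlier vertex confused with j would be unique, hence the least one *)
move=> [<-]; apply: (partial_code_extend pc (subxx C) domj) => v vj.
apply/negP => /eqP confused; case/negP: (nok v); rewrite vj confused eqxx /=.
apply/forallP => k; apply/implyP => /andP[kj /eqP confk].
have [-> // | kv] := eqVneq k v.
by case/negP: (sep _ _ kj vj kv); rewrite confk confused.
Qed.

Definition lex_fold (oC : option {set 'I_n}) (j : 'I_n) : option {set 'I_n} :=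
  if oC is Some C then lex_step e j C else None.

Definition run_spec (m : nat) (oC : option {set 'I_n}) : Prop :=
  if oC is Some C then partial_code C m
  else exists v w : 'I_n, [/\ v != w, v < m, w < m & N e v = N e w].

Lemma run_spec_fold (s : seq 'I_n) (m : nat) (oC : option {set 'I_n}) :
  map val s = iota m (size s) -> run_spec m oC ->
  run_spec (m + size s) (foldl lex_fold oC s).
Proof.
elim: s m oC => [|j s IH] m oC /=; first by rewrite addn0.
case=> <- vals spec; rewrite addnS -addSn; apply: IH => //.
case: oC spec => [C | [v [w [vw vj wj twin]]]] /=; last first.
  by exists v, w; split; rewrite // ltnS ltnW.
case step: (lex_step e j C) => [C' | ] pc; first exact: lex_step_extend step.
have [k kj twin] := lex_step_fail step.
exists k, j; split; rewrite ?ltnSn //; [by rewrite neq_ltn kj | exact: ltnW].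
Qed.

Lemma lex_algorithm_spec : run_spec n (lex_algorithm e).
Proof.
have := @run_spec_fold (enum 'I_n) 0 (Some set0).
by rewrite size_enum_ord val_enum_ord; apply; split.
Qed.

End LexAlgorithm.

Theorem proposition1 (n : nat) (e : rel 'I_n) :
  simple_graph e ->
  (lex_algorithm e = None <-> ~ twin_free e) /\
  (twin_free e -> exists C, lex_algorithm e = Some C /\ identifying_code e C).
Proof.
move=> _; have := lex_algorithm_spec e.
case: (lex_algorithm e) => [C /partial_code_full code | [v [w [vw _ _ twin]]]].
  have tf := identifying_code_twin_free code.
  by split=> [|_]; [split=> // /(_ tf) | exists C].
have not_tf : ~ twin_free e by move/(_ v w vw); rewrite twin eqxx.
by split=> // /not_tf.
Qed.
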